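(* Let $p\in\mathbb N$ and let $P(p)$ be the set of partitions of $\{1,\ldots,p\}$. For $\pi\in P(p)$ and $x\in\mathbb C^n$ (indexed by $\mathbb Z/n\mathbb Z$) put $f_\pi(x)=\sum_{i\in\pi}x_{i_1}\cdots x_{i_p}$ and $g_\pi(x)=\sum_{i\vdash\pi}x_{i_1}\cdots x_{i_p}$, the sums being over multi-indices $i=(i_1,\ldots,i_p)\in(\mathbb Z/n\mathbb Z)^p$. Then the duality map $\Phi$ maps the set $$X_p=\{(x_{j-i})\in C^{circ}_n(\infty)\mid f_\pi(x),g_\pi(x)\in\mathbb R\ \text{for all }\pi\in P(p)\}$$ bijectively onto itself (here $x$ denotes the first row).
   Context: For a partition $\pi$ of $\{1,\ldots,p\}$ and a multi-index $i=(i_1,\ldots,i_p)$, write $i\in\pi$ if $a\sim_\pi b$ implies $i_a=i_b$, and write $i\vdash\pi$ if $\sum_{r\in\beta}i_r=0$ in $\mathbb Z/n\mathbb Z$ for every block $\beta$ of $\pi$. $C^{circ}_n(\infty)$ is the set of $n\times n$ circulant complex Hadamard matrices ($H_{ij}=x_{j-i}$, $|x_k|=1$, $H/\sqrt n$ unitary). $F=(w^{ij}/\sqrt n)_{i,j=0}^{n-1}$ with $w=e^{2\pi i/n}$, and $\Phi((x_{j-i})_{ij})=((Fx)_{j-i})_{ij}$, a bijection of $C^{circ}_n(\infty)$ onto itself. *)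

(* Complex numbers: an arbitrary numClosedFieldType C. *)
From HB Require Import structures.
From mathcomp Require Import all_boot all_order all_algebra.
Set Implicit Arguments. Unset Strict Implicit. Unset Printing Implicit Defensive.
Import Order.TTheory GRing.Theory Num.Theory.
Local Open Scope ring_scope.

Section Defs.
Variable C : numClosedFieldType.
Variable n : nat.
(* index type Z/NZ with N = n.+1 >= 1 *)
Local Notation N := n.+1.
Local Notation idx := 'I_N.

(* w = e^{2 pi i / N}: n.-root (-1) is e^{i pi / N} (minimal argument). *)
Definition omega : C := (N.-root (-1)) ^+ 2.

Definition circ (x : idx -> C) : 'M[C]_N := \matrix_(i, j) x (j - i).

Definition row0 (H : 'M[C]_N) : idx -> C := fun k => H ord0 k.

Definition unitary (U : 'M[C]_N) : Prop := U *m (map_mx Num.conj U)^T = 1%:M.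

Definition hadamard (H : 'M[C]_N) : Prop :=
  (forall i j, `|H i j| = 1) /\ unitary ((sqrtC (N%:R))^-1 *: H).

Definition fourier (x : idx -> C) : idx -> C :=
  fun k => (sqrtC (N%:R))^-1 * \sum_(j : idx) omega ^+ (k * j)%N * x j.

Definition Phi (H : 'M[C]_N) : 'M[C]_N := circ (fourier (row0 H)).

Definition circ_hadamard (H : 'M[C]_N) : Prop :=
  H = circ (row0 H) /\ hadamard H.

Variable p : nat.

Definition is_partition (pi : {set {set 'I_p}}) : bool :=
  partition pi [set: 'I_p].

Definition idx_in (pi : {set {set 'I_p}}) (i : {ffun 'I_p -> idx}) : bool :=
  [forall B in pi, forall a in B, forall b in B, i a == i b].

Definition idx_vdash (pi : {set {set 'I_p}}) (i : {ffun 'I_p -> idx}) : bool :=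
  [forall B in pi, (\sum_(r in B) i r == 0)%R].

Definition f_pi (pi : {set {set 'I_p}}) (x : idx -> C) : C :=
  \sum_(i : {ffun 'I_p -> idx} | idx_in pi i) \prod_(r < p) x (i r).

Definition g_pi (pi : {set {set 'I_p}}) (x : idx -> C) : C :=
  \sum_(i : {ffun 'I_p -> idx} | idx_vdash pi i) \prod_(r < p) x (i r).

Definition Xp (H : 'M[C]_N) : Prop :=
  circ_hadamard H /\
  forall pi, is_partition pi ->
    f_pi pi (row0 H) \is Num.real /\ g_pi pi (row0 H) \is Num.real.

End Defs.

(* Write x for the first row of a circulant matrix and F for the unitary
   discrete Fourier transform on Z/NZ, so that Phi (circ x) = circ (F x).
   The proof has three ingredients.
   1. omega = (N.-root (-1))^2 is a primitive N-th root of unity.  The library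
      only fixes N.-root (-1) by a "maximal real part" condition, so we show
      that a nontrivial root of unity of maximal real part in the upper half
      plane generates all roots of unity of its order.
   2. Fourier analysis on Z/NZ: characters chi a b = omega^(ab), their
      orthogonality, inversion F (F x) = x o (-), Parseval, and the fact that
      F maps first rows of circulant Hadamard matrices to first rows of
      circulant Hadamard matrices.
   3. For a partition pi, the multi-indices i \in pi form a subgroup of
      (Z/NZ)^p whose annihilator for the pairing omega^(<k,j>) is
      {j | j |- pi}.  Hence f_pi (F x) = N^(-p/2) |pi-subgroup| g_pi x and,
      by inversion, g_pi (F x) is a real multiple of f_pi x, so Phi maps X_p
      into X_p.
   Finally Phi^4 is the identity on circulant matrices (F^2 reverses the row),
   which gives injectivity and surjectivity of Phi on X_p. *)

From Pilot Require Import Defs.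
From HB Require Import structures.
From mathcomp Require Import all_boot all_order all_algebra.
From mathcomp Require Import cyclic separable cyclotomic.
From mathcomp Require Import ring.
Set Implicit Arguments. Unset Strict Implicit. Unset Printing Implicit Defensive.
Import Order.TTheory GRing.Theory Num.Theory.
Local Open Scope ring_scope.

Section RootsOfUnity.
Variable C : numClosedFieldType.

(* An algebraically closed field of characteristic 0 has primitive roots of
   unity of every order: the roots of X^M - 1 are simple. *)
Lemma prim_root_exists M : (0 < M)%N -> exists z : C, M.-primitive_root z.
Proof.
move=> M_gt0; pose p : {poly C} := 'X^M - 1.
have [r Dp] := closed_field_poly_normal p.
rewrite (monicP _) ?monicXnsubC // scale1r in Dp.
have r_roots : all M.-unity_root r by apply/allP=> z; rewrite -root_prod_XsubC -Dp.
have size_r : (M < (size r).+1)%N by rewrite -(size_prod_XsubC r id) -Dp size_XnsubC.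
have [|z] := hasP (has_prim_root M_gt0 r_roots _ size_r); last by exists z.
by rewrite -separable_prod_XsubC -Dp separable_Xn_sub_1 // pnatr_eq0 -lt0n.
Qed.

Lemma real_max_in_seq (T : eqType) (f : T -> C) (s : seq T) x0 :
  (forall x, f x \is Num.real) -> x0 \in s ->
  exists2 x, x \in s & forall y, y \in s -> f y <= f x.
Proof.
move=> f_real; elim: s x0 => // a [|b s] IH x0 _.
  by exists a => [|y]; rewrite ?mem_seq1 // => /eqP->.
have [m m_in m_max] := IH b (mem_head _ _).
have [le_am|lt_ma] := real_leP (f_real a) (f_real m).
  exists m => [|y]; first by rewrite inE m_in orbT.
  by rewrite inE => /orP[/eqP->|/m_max].
exists a => [|y]; first exact: mem_head.
by rewrite inE => /orP[/eqP->//|/m_max/le_trans]; apply; apply: ltW.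
Qed.

Lemma norm_unity_root (x : C) k : (0 < k)%N -> x ^+ k = 1 -> `|x| = 1.
Proof.
move=> k_gt0 xk1; have /eqP := congr1 Num.norm xk1.
by rewrite normrX normr1 pexpr_eq1 // => /eqP.
Qed.

Lemma conj_unit_norm (x : C) : `|x| = 1 -> x^* = x^-1.
Proof. by move=> x1; rewrite invC_norm x1 expr1n invr1 mul1r. Qed.

Lemma Re_lt1 (x : C) : `|x| = 1 -> x != 1 -> 'Re x < 1.
Proof.
move=> x1 x_neq1; rewrite -[X in _ < X]x1 (lt_leif (leif_Re_Creal x)).
by apply: contra x_neq1 => x_ge0; rewrite -x1 ger0_norm.
Qed.

(* The plane-geometry core of the generation argument: if e = a + ib
   (b >= 0, e <> 1) and w = c + id (d >= 0) are on the unit circle with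
   Re w <= Re e, then rotating w by e^-1 strictly increases its real part. *)
Lemma unit_circle_ineq (a b c d : C) : 0 <= b -> 0 <= d -> a < 1 ->
  a ^+ 2 + b ^+ 2 = 1 -> c ^+ 2 + d ^+ 2 = 1 -> c <= a ->
  c * a + d * b <= c -> False.
Proof.
move=> b0 d0 a1 hab hcd ca h.
have db_ge0 : 0 <= d * b by apply: mulr_ge0.
have db_le : d * b <= c * (1 - a) by rewrite mulrBr mulr1 lerBrDl.
have a1' : 0 < 1 - a by rewrite subr_gt0.
have c_ge0 : 0 <= c by rewrite -(pmulr_lge0 _ a1'); apply: le_trans db_le.
have ca2 : c ^+ 2 <= a ^+ 2 by rewrite ler_pXn2r // ?nnegrE //; apply: le_trans ca.
have bd2 : b ^+ 2 <= d ^+ 2.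
  have -> : b ^+ 2 = 1 - a ^+ 2 by rewrite -hab addrC addKr.
  have -> : d ^+ 2 = 1 - c ^+ 2 by rewrite -hcd addrC addKr.
  by rewrite lerD2l lerN2.
have bd : b <= d by rewrite -(ler_pXn2r (isT : (0 < 2)%N)) ?nnegrE.
have bb_le : b * b <= d * b by rewrite ler_wpM2r.
have ca_le : c * (1 - a) <= a * (1 - a) by rewrite ler_wpM2r // ltW.
have bb : b * b = (1 - a) * (1 + a).
  by rewrite -expr2 mulrDr mulr1 mulrBl mul1r -expr2 addrA subrK -hab addrC addKr.
have : (1 - a) * (1 + a) <= (1 - a) * a.
  by rewrite -bb [X in _ <= X]mulrC; apply: le_trans bb_le (le_trans db_le ca_le).
by rewrite ler_pM2l // addrC gerDl ler10.
Qed.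

(* A nontrivial M-th root of unity eta in the closed upper half plane whose
   real part is maximal among nontrivial M-th roots generates all M-th roots:
   for any y, the power y * eta^k of maximal real part must be 1, since
   otherwise multiplying it by eta or eta^-1 would increase its real part. *)
Lemma max_Re_root_generates M (eta : C) :
  (0 < M)%N -> eta ^+ M = 1 -> eta != 1 -> 0 <= 'Im eta ->
  (forall y, y ^+ M = 1 -> y != 1 -> 'Re y <= 'Re eta) ->
  forall y, y ^+ M = 1 -> exists k, y = eta ^+ k.
Proof.
move=> M_gt0 etaM eta_neq1 Im_eta eta_max y yM.
have eta_norm : `|eta| = 1 := norm_unity_root M_gt0 etaM.
pose s := [seq y * eta ^+ k | k <- iota 0 M].
have in_s j : y * eta ^+ j \in s.
  by apply/mapP; exists (j %% M)%N; rewrite ?mem_iota ?ltn_pmod ?expr_mod.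
have [_ /mapP[k kM ->] w_max] := real_max_in_seq (fun x => Creal_Re x) (in_s 0%N).
set w := y * eta ^+ k in w_max *.
have wM : w ^+ M = 1 by rewrite exprMn yM exprAC etaM expr1n mulr1.
have [w1|w_neq1] := eqVneq w 1.
  move: kM; rewrite mem_iota add0n => /andP[_ kM]; exists (M - k)%N.
  by rewrite -[eta ^+ _]mul1r -w1 -mulrA -exprD subnKC ?etaM ?mulr1 // ltnW.
have w_norm : `|w| = 1 := norm_unity_root M_gt0 wM.
have Re_w_eta : 'Re (w * eta) <= 'Re w by rewrite -mulrA -exprSr w_max.
have Re_w_etaC : 'Re (w * eta^*) <= 'Re w.
  have eta_neq0 : eta != 0 by rewrite -normr_eq0 eta_norm oner_eq0.
  have -> : eta^* = eta ^+ M.-1.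
    rewrite conj_unit_norm //; apply: (mulIf eta_neq0).
    by rewrite mulVf // -exprSr prednK.
  by rewrite -mulrA -exprD w_max.
have unit_ReIm x : `|x| = 1 -> 'Re x ^+ 2 + 'Im x ^+ 2 = 1.
  by move=> x1; rewrite -normC2_Re_Im x1 expr1n.
exfalso; apply: (unit_circle_ineq Im_eta (normr_ge0 ('Im w)) (Re_lt1 eta_norm eta_neq1)).
- exact: unit_ReIm.
- by rewrite real_normK ?Creal_Im //; apply: unit_ReIm.
- exact: eta_max.
have [Im_w_ge0|Im_w_lt0] := real_ge0P (Creal_Im w).
  by move: Re_w_etaC; rewrite ReM Re_conj Im_conj mulrN opprK.
by move: Re_w_eta; rewrite ReM mulNr mulrC [_ * 'Im eta]mulrC.
Qed.

Lemma generator_prim M (eta : C) : (0 < M)%N -> eta ^+ M = 1 ->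
  (forall y, y ^+ M = 1 -> exists k, y = eta ^+ k) -> M.-primitive_root eta.
Proof.
move=> M_gt0 etaM eta_gen; have [z z_prim] := prim_root_exists M_gt0.
have [m eta_m m_dvd] := prim_order_exists M_gt0 etaM.
have [k zk] := eta_gen z (prim_expr_order z_prim).
suff /eqP mM : m == M by rewrite -mM.
rewrite eqn_dvd m_dvd (prim_order_dvd z_prim) zk exprAC.
by rewrite (prim_expr_order eta_m) expr1n eqxx.
Qed.

(* Such a root of maximal real part exists (conjugate it into the upper
   half plane if necessary). *)
Lemma exists_max_Re_root M : (1 < M)%N -> exists eta : C,
  [/\ eta ^+ M = 1, eta != 1, 0 <= 'Im eta &
      forall y, y ^+ M = 1 -> y != 1 -> 'Re y <= 'Re eta].
Proof.
move=> M_gt1; have [z z_prim] := prim_root_exists (ltnW M_gt1).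
pose s := [seq x <- [seq z ^+ k | k <- iota 0 M] | x != 1].
have in_s y : y ^+ M = 1 -> y != 1 -> y \in s.
  move=> /(prim_rootP z_prim)[i ->] zi_neq1; rewrite mem_filter zi_neq1 /=.
  by apply: map_f; rewrite mem_iota /= add0n ltn_ord.
have z_neq1 : z != 1.
  by rewrite -[z]expr1 -(prim_order_dvd z_prim) dvdn1 gtn_eqF.
have [eta0 eta0_in eta0_max] :=
  real_max_in_seq (fun x => Creal_Re x) (in_s z (prim_expr_order z_prim) z_neq1).
move: eta0_in; rewrite mem_filter => /andP[eta0_neq1 /mapP[k _ eta0_def]].
have eta0M : eta0 ^+ M = 1 by rewrite eta0_def exprAC (prim_expr_order z_prim) expr1n.
have eta0_max' y : y ^+ M = 1 -> y != 1 -> 'Re y <= 'Re eta0.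
  by move=> yM y_neq1; apply: eta0_max; apply: in_s.
have [Im_ge0|Im_lt0] := real_ge0P (Creal_Im eta0); first by exists eta0.
exists eta0^*; split.
- by rewrite -rmorphXn /= eta0M rmorph1.
- by apply: contra eta0_neq1 => /eqP eta0C; rewrite -[eta0]conjCK eta0C rmorph1.
- by rewrite Im_conj oppr_ge0 ltW.
- by move=> y yM y_neq1; rewrite Re_conj eta0_max'.
Qed.

(* omega is a primitive N-th root of unity: N.-root (-1) coincides with the
   maximal-real-part generator of the 2N-th roots of unity. *)
Lemma omega_prim n : n.+1.-primitive_root (omega C n).
Proof.
rewrite /omega; case: n => [|n].
  rewrite root1C sqrrN expr1n; apply/andP; split=> //.
  by apply/forallP=> i; rewrite (ord1 i) unity_rootE expr1n !eqxx.
set N := n.+2; have M_gt1 : (1 < N * 2)%N by [].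
have M_gt0 := ltnW M_gt1.
have [eta [etaM eta_neq1 Im_eta eta_max]] := exists_max_Re_root M_gt1.
have eta_gen := max_Re_root_generates M_gt0 etaM eta_neq1 Im_eta eta_max.
have eta_prim := generator_prim M_gt0 etaM eta_gen.
have N1_neq1 : (-1 : C) != 1 by rewrite lt_eqF // (lt_trans (ltrN10 C) ltr01).
have etaN : eta ^+ N = -1.
  have : (eta ^+ N) ^+ 2 == 1 by rewrite -exprM -(prim_order_dvd eta_prim).
  rewrite sqrf_eq1 -(prim_order_dvd eta_prim) => /orP[|/eqP//].
  by move/(dvdn_leq (isT : (0 < N)%N)); rewrite -{2}(muln1 N) leq_pmul2l.
set rho := N.-root (-1).
have rhoN : rho ^+ N = -1 by rewrite rootCK.
have rhoM : rho ^+ (N * 2) = 1 by rewrite exprM rhoN sqrrN expr1n.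
have rho_neq1 : rho != 1 by apply: contra N1_neq1 => /eqP rho1; rewrite -rhoN rho1 expr1n.
have -> : rho = eta.
  apply: eqC_semipolar.
  - by rewrite (norm_unity_root M_gt0 rhoM) (norm_unity_root M_gt0 etaM).
  - by apply/eqP; rewrite eq_le rootC_Re_max // eta_max.
  - by rewrite mulr_ge0 ?Im_rootC_ge0.
by have := dvdn_prim_root eta_prim (dvdn_mulr 2 (dvdnn N)); rewrite mulKn.
Qed.

End RootsOfUnity.

Section Fourier.
Variables (C : numClosedFieldType) (n : nat).
Local Notation N := n.+1.
Local Notation idx := 'I_N.
Local Notation omega := (omega C n).
Local Notation s := (sqrtC (N%:R : C))^-1.

Let prim_omega : N.-primitive_root omega := omega_prim C n.

Definition chi (a b : idx) : C := omega ^+ (a * b).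

Lemma chiC a b : chi a b = chi b a.
Proof. by rewrite /chi mulnC. Qed.

Lemma chiDl a b c : chi (a + b) c = chi a c * chi b c.
Proof.
by apply/eqP; rewrite /chi -exprD (eq_prim_root_expr prim_omega) /= modnMml mulnDl.
Qed.

Lemma chiDr a b c : chi c (a + b) = chi c a * chi c b.
Proof. by rewrite ![chi c _]chiC chiDl. Qed.

Lemma chi0l b : chi 0 b = 1.
Proof. by rewrite /chi mul0n expr0. Qed.

Lemma chi0r a : chi a 0 = 1.
Proof. by rewrite chiC chi0l. Qed.

Lemma chiNl a b : chi (- a) b * chi a b = 1.
Proof. by rewrite -chiDl addNr chi0l. Qed.

Lemma norm_chi a b : `|chi a b| = 1.
Proof.
apply: (@norm_unity_root _ _ N) => //.
by rewrite /chi exprAC (prim_expr_order prim_omega) expr1n.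
Qed.

Lemma chi_neq0 a b : chi a b != 0.
Proof. by rewrite -normr_eq0 norm_chi oner_neq0. Qed.

Lemma chiN a b : chi (- a) b = chi a (- b).
Proof. by apply: (mulIf (chi_neq0 a b)); rewrite chiNl -chiDr addNr chi0r. Qed.

Lemma conj_chi a b : (chi a b)^* = chi (- a) b.
Proof.
rewrite conj_unit_norm ?norm_chi //; apply: (mulIf (chi_neq0 a b)).
by rewrite chiNl mulVf ?chi_neq0.
Qed.

Lemma sum_chi a : \sum_(t : idx) chi t a = N%:R * (a == 0)%:R.
Proof.
have [->|a_neq0] := eqVneq a 0.
  by rewrite mulr1 (eq_bigr (fun _ => 1)) ?sumr_const ?card_ord // => t _; rewrite chi0r.
rewrite mulr0; set r := omega ^+ a.
have r_neq1 : r != 1.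
  rewrite /r -(prim_order_dvd prim_omega); apply: contra a_neq0 => N_dvd_a.
  have [a0|a_gt0] := posnP a; first exact/eqP/val_inj.
  by move: (dvdn_leq a_gt0 N_dvd_a); rewrite leqNgt ltn_ord.
have : (r - 1) * \sum_(t < N) r ^+ t = 0.
  by rewrite -subrX1 /r exprAC (prim_expr_order prim_omega) expr1n subrr.
move/eqP; rewrite mulf_eq0 subr_eq0 (negbTE r_neq1) /= => /eqP sum0.
by rewrite -[RHS]sum0; apply: eq_bigr => t _; rewrite /chi /r mulnC exprM.
Qed.

Lemma prod_chi (I : finType) (P : pred I) (F : I -> idx) c :
  \prod_(r | P r) chi c (F r) = chi c (\sum_(r | P r) F r).
Proof. by rewrite (big_morph (chi c) (fun a b => chiDr a b c) (chi0r c)). Qed.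

Lemma exists_chi_neq1 b : b != 0 -> exists c, chi c b != 1.
Proof.
move=> b_neq0; apply/existsP; apply: contraT; rewrite negb_exists => /forallP all1.
have : \sum_(c : idx) chi c b = N%:R.
  by rewrite (eq_bigr (fun _ => 1)) ?sumr_const ?card_ord // => c _; apply/eqP/negPn/all1.
by rewrite sum_chi (negbTE b_neq0) mulr0 => /eqP; rewrite eq_sym pnatr_eq0.
Qed.

Lemma sum_delta (F : idx -> C) c : \sum_l F l * (l == c)%:R = F c.
Proof.
by rewrite (bigD1 c) //= eqxx mulr1 big1 ?addr0 // => l /negbTE->; rewrite mulr0.
Qed.

Lemma scale_ge0 : 0 <= s.
Proof. by rewrite invr_ge0 sqrtC_ge0 ler0n. Qed.

Lemma scale_neq0 : s != 0.
Proof. by rewrite invr_eq0 sqrtC_eq0 pnatr_eq0. Qed.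

Lemma conj_scale : s^* = s.
Proof. exact: geC0_conj scale_ge0. Qed.

Lemma scale_sqr : s * s * N%:R = 1.
Proof. by rewrite -expr2 exprVn sqrtCK mulVf // pnatr_eq0. Qed.

Lemma fourierE (x : idx -> C) k : fourier x k = s * \sum_j chi k j * x j.
Proof. by []. Qed.

Lemma eq_fourier (x y : idx -> C) : x =1 y -> fourier x =1 fourier y.
Proof. by move=> eq_xy k; rewrite !fourierE; under eq_bigr do rewrite eq_xy. Qed.

Lemma fourierK (x : idx -> C) k : fourier (fourier x) k = x (- k).
Proof.
rewrite fourierE.
transitivity (s * s * \sum_l x l * \sum_j chi j (k + l)).
  rewrite -mulrA; congr (_ * _).
  transitivity (\sum_j \sum_l s * (chi k j * chi j l * x l)).
    apply: eq_bigr => j _; rewrite fourierE !big_distrr /=.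
    by apply: eq_bigr => l _; ring.
  rewrite exchange_big big_distrr /=; apply: eq_bigr => l _.
  rewrite !big_distrr /=; apply: eq_bigr => j _.
  by rewrite chiDr [chi j k]chiC; ring.
under eq_bigr do rewrite sum_chi addrC addr_eq0.
rewrite (eq_bigr (fun l => N%:R * (x l * (l == - k)%:R))); last by move=> l _; ring.
by rewrite -big_distrr /= sum_delta mulrA scale_sqr mul1r.
Qed.

Lemma unitary_circE (x : idx -> C) : unitary (s *: circ x) <->
  forall i j, s * s * \sum_l x (l - i) * (x (l - j))^* = (i == j)%:R.
Proof.
have entry i j : (s *: circ x *m (map_mx Num.conj (s *: circ x))^T) i j =
    s * s * \sum_l x (l - i) * (x (l - j))^*.
  rewrite mxE big_distrr /=; apply: eq_bigr => l _.
  by rewrite !mxE rmorphM /= conj_scale; ring.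
split=> [U i j | U]; first by rewrite -entry U mxE.
by apply/matrixP => i j; rewrite entry U mxE.
Qed.

Lemma conj_fourier (x : idx -> C) k :
  (fourier x k)^* = s * \sum_l chi (- k) l * (x l)^*.
Proof.
rewrite fourierE rmorphM /= conj_scale rmorph_sum /=; congr (_ * _).
by apply: eq_bigr => l _; rewrite rmorphM /= conj_chi.
Qed.

Lemma norm_fourier (x : idx -> C) : unitary (s *: circ x) ->
  forall k, `|fourier x k| = 1.
Proof.
move=> /unitary_circE U k.
suff sqr_norm : fourier x k * (fourier x k)^* = 1.
  by apply/eqP; rewrite -(pexpr_eq1 (isT : (0 < 2)%N)) ?normr_ge0 // normCK sqr_norm.
rewrite conj_fourier {1}fourierE.
transitivity (s * s * \sum_l \sum_j chi k j * chi (- k) l * x j * (x l)^*).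
  rewrite mulrACA; congr (_ * _); rewrite big_distrl exchange_big /=.
  by apply: eq_bigr => l _; rewrite big_distrr /=; apply: eq_bigr => j _ /=; ring.
transitivity (s * s * \sum_l \sum_d chi k d * x (d + l) * (x l)^*).
  congr (_ * _); apply: eq_bigr => l _.
  rewrite (reindex_inj (addIr l)) /=; apply: eq_bigr => d _.
  rewrite chiDr -[RHS]mulr1 -(chiNl k l); ring.
rewrite exchange_big big_distrr /=.
transitivity (\sum_d chi k d * (d == 0)%:R); last by rewrite sum_delta chi0r.
apply: eq_bigr => d _; rewrite -oppr_eq0 -U [RHS]mulrCA [in RHS]big_distrr /=.
by congr (_ * _); apply: eq_bigr => l _; rewrite opprK subr0 addrC; ring.
Qed.

Lemma parseval (u v : idx -> C) :
  \sum_l fourier u l * (fourier v l)^* = \sum_a u a * (v a)^*.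
Proof.
transitivity (s * s * \sum_a \sum_b \sum_l chi l a * chi (- l) b * u a * (v b)^*).
  symmetry.
  rewrite (eq_bigr (fun a => \sum_l \sum_b chi l a * chi (- l) b * u a * (v b)^*));
    last by move=> a _; rewrite exchange_big.
  rewrite exchange_big big_distrr /=; apply: eq_bigr => l _.
  rewrite conj_fourier fourierE [RHS]mulrACA; congr (_ * _).
  rewrite big_distrl /=; apply: eq_bigr => a _.
  by rewrite big_distrr /=; apply: eq_bigr => b _; ring.
transitivity (s * s * \sum_a \sum_b u a * (v b)^* * N%:R * (b == a)%:R).
  congr (_ * _); apply: eq_bigr => a _; apply: eq_bigr => b _.
  transitivity (u a * (v b)^* * \sum_l chi l (a - b)).
    by rewrite big_distrr /=; apply: eq_bigr => l _; rewrite chiN chiDr; ring.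
  by rewrite sum_chi subr_eq0 eq_sym mulrA.
rewrite big_distrr /=; apply: eq_bigr => a _.
rewrite (eq_bigr (fun b => (N%:R * u a) * (v b)^* * (b == a)%:R)) ?sum_delta;
  last by move=> b _; ring.
transitivity (s * s * N%:R * (u a * (v a)^*)); first by ring.
by rewrite scale_sqr mul1r.
Qed.

(* If x has entries of modulus one, then s * circ (F x) is unitary: the
   autocorrelation of F x is computed with Parseval on modulated copies of x. *)
Lemma unitary_fourier (x : idx -> C) : (forall a, `|x a| = 1) ->
  unitary (s *: circ (fourier x)).
Proof.
move=> x_unit; apply/unitary_circE => i j.
have shift c l : fourier x (l - c) = fourier (fun a => chi (- c) a * x a) l.
  by rewrite !fourierE; congr (_ * _); apply: eq_bigr => a _; rewrite chiDl; ring.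
under eq_bigr do rewrite !shift.
rewrite parseval (eq_bigr (fun a => chi a (j - i))); last first.
  move=> a _; rewrite rmorphM /= conj_chi opprK -[RHS]mulr1.
  rewrite -(expr1n _ 2) -(x_unit a) normCK [chi a _]chiC chiDl; ring.
by rewrite sum_chi subr_eq0 [j == i]eq_sym mulrA scale_sqr mul1r.
Qed.

End Fourier.

Lemma sum_shift_eq0 (R : idomainType) (T : finType) (P : pred T) (F : T -> R)
    (h : T -> T) c :
  injective h -> (forall t, P (h t) = P t) -> (forall t, F (h t) = c * F t) ->
  c != 1 -> \sum_(t | P t) F t = 0.
Proof.
move=> h_inj Ph Fh c_neq1; set S := \sum_(t | P t) F t.
have : S = c * S.
  rewrite {1}/S (reindex_inj h_inj) /= (eq_bigl _ _ Ph) big_distrr /=.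
  by apply: eq_bigr => t _; rewrite Fh.
move/eqP; rewrite -subr_eq0 -{1}(mul1r S) -mulrBl mulf_eq0 subr_eq0.
by rewrite eq_sym (negbTE c_neq1) => /eqP.
Qed.

Section Partitions.
Variables (C : numClosedFieldType) (n p : nat).
Local Notation N := n.+1.
Local Notation idx := 'I_N.
Local Notation s := (sqrtC (N%:R : C))^-1.
Local Notation mindex := {ffun 'I_p -> idx}.
Local Notation chi := (@chi C n).
Implicit Types (pi : {set {set 'I_p}}) (k j : mindex).

Definition Chi k j : C := \prod_(r < p) chi (k r) (j r).

Lemma ChiDl k k' j : Chi (k + k') j = Chi k j * Chi k' j.
Proof. by rewrite /Chi -big_split; apply: eq_bigr => r _; rewrite ffunE chiDl. Qed.

Lemma in_block pi k B a b :
  idx_in pi k -> B \in pi -> a \in B -> b \in B -> k a = k b.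
Proof.
move=> /forall_inP k_in Bpi aB bB.
by move: (k_in B Bpi) => /forall_inP/(_ a aB)/forall_inP/(_ b bB)/eqP.
Qed.

Lemma idx_in_pointwise pi (f : idx -> idx -> idx) k1 k2 k :
  idx_in pi k1 -> idx_in pi k2 -> (forall r, k r = f (k1 r) (k2 r)) -> idx_in pi k.
Proof.
move=> k1_in k2_in kE; apply/forall_inP => B Bpi.
apply/forall_inP => a aB; apply/forall_inP => b bB.
by rewrite !kE (in_block k1_in Bpi aB bB) (in_block k2_in Bpi aB bB).
Qed.

Lemma idx_inD pi k k' : idx_in pi k -> idx_in pi k' -> idx_in pi (k + k').
Proof. by move=> k_in k'_in; apply: (idx_in_pointwise k_in k'_in) => r; rewrite ffunE. Qed.

Lemma idx_inN pi k : idx_in pi k -> idx_in pi (- k).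
Proof.
by move=> k_in; apply: (idx_in_pointwise (f := fun a _ => - a) k_in k_in) => r; rewrite ffunE.
Qed.

Lemma idx_in_indicator pi B (c : idx) : is_partition pi -> B \in pi ->
  idx_in pi [ffun r => if r \in B then c else 0].
Proof.
move=> /and3P[_ triv _] Bpi; apply/forall_inP => B' B'pi.
apply/forall_inP => a aB'; apply/forall_inP => b bB'; rewrite !ffunE.
suff -> : (a \in B) = (b \in B) by [].
apply/idP/idP => [aB|bB].
  by rewrite -(def_pblock triv Bpi aB) (def_pblock triv B'pi aB').
by rewrite -(def_pblock triv Bpi bB) (def_pblock triv B'pi bB').
Qed.

(* Every j |- pi pairs trivially with the subgroup {i \in pi}: i is constant
   on each block, where the entries of j sum to 0. *)
Lemma Chi_in_vdash pi k j : is_partition pi ->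
  idx_in pi k -> idx_vdash pi j -> Chi k j = 1.
Proof.
move=> /and3P[/eqP cover_pi triv _] k_in /forall_inP j_vdash.
have -> : Chi k j = \prod_(r in cover pi) chi (k r) (j r).
  by apply: eq_bigl => r; rewrite cover_pi inE.
rewrite big_trivIset //; apply: big1 => B Bpi.
have [->|[r0 r0B]] := set_0Vmem B; first by rewrite big_set0.
rewrite (eq_bigr (fun r => chi (k r0) (j r))); last first.
  by move=> r rB; rewrite (in_block k_in Bpi rB r0B).
by rewrite prod_chi (eqP (j_vdash B Bpi)) chi0r.
Qed.

Definition card_in pi : nat := #|[pred k : mindex | idx_in pi k]|.

Lemma card_in_neq0 pi : (card_in pi)%:R != 0 :> C.
Proof.
rewrite pnatr_eq0 -lt0n; apply/card_gt0P; exists 0; rewrite inE.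
by apply/forall_inP => B _; apply/forall_inP => a _; apply/forall_inP => b _; rewrite !ffunE.
Qed.

Lemma sum_Chi_in pi j : is_partition pi ->
  \sum_(k | idx_in pi k) Chi k j = (card_in pi)%:R * (idx_vdash pi j)%:R.
Proof.
move=> pi_part; have [j_vdash|j_vdash] := boolP (idx_vdash pi j).
  rewrite mulr1 /card_in -sumr_const; apply: eq_big => // k k_in.
  exact: Chi_in_vdash pi_part k_in j_vdash.
rewrite mulr0; move: j_vdash => /forall_inPn[B Bpi /= sumB_neq0].
have [c chi_neq1] := exists_chi_neq1 C sumB_neq0.
pose k0 : mindex := [ffun r => if r \in B then c else 0].
have k0_in : idx_in pi k0 := idx_in_indicator c pi_part Bpi.
apply: (sum_shift_eq0 (h := fun k => k + k0) (c := Chi k0 j)).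
- exact: addIr.
- move=> k; apply/idP/idP => [kk0_in|k_in]; last exact: idx_inD.
  by rewrite -(addrK k0 k); apply: idx_inD (idx_inN k0_in).
- by move=> k; rewrite ChiDl mulrC.
suff -> : Chi k0 j = chi c (\sum_(r in B) j r) by [].
rewrite /Chi (bigID (mem B)) /= [X in _ * X]big1 => [|r rB]; last first.
  by rewrite ffunE (negbTE rB) chi0l.
by rewrite mulr1 -prod_chi; apply: eq_bigr => r rB; rewrite ffunE rB.
Qed.

Lemma eq_f_pi pi (x y : idx -> C) : x =1 y -> f_pi pi x = f_pi pi y.
Proof. by move=> eq_xy; apply: eq_bigr => i _; apply: eq_bigr => r _; rewrite eq_xy. Qed.

Lemma eq_g_pi pi (x y : idx -> C) : x =1 y -> g_pi pi x = g_pi pi y.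
Proof. by move=> eq_xy; apply: eq_bigr => i _; apply: eq_bigr => r _; rewrite eq_xy. Qed.

Lemma f_pi_reflect pi (x : idx -> C) : f_pi pi (fun a => x (- a)) = f_pi pi x.
Proof.
rewrite /f_pi (reindex_inj (@oppr_inj mindex)) /=.
rewrite (eq_bigl (idx_in pi)) => [|k]; last first.
  by apply/idP/idP => /idx_inN; rewrite ?opprK.
by apply: eq_bigr => k _; apply: eq_bigr => r _; rewrite ffunE opprK.
Qed.

Lemma prod_fourier (x : idx -> C) (i : mindex) :
  \prod_(r < p) fourier x (i r) =
  s ^+ p * \sum_(j : mindex) \prod_(r < p) (chi (i r) (j r) * x (j r)).
Proof.
rewrite (eq_bigr (fun r => s * \sum_t chi (i r) t * x t)) //.
by rewrite big_split /= prodr_const card_ord bigA_distr_bigA.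
Qed.

Lemma f_pi_fourier pi (x : idx -> C) : is_partition pi ->
  f_pi pi (fourier x) = s ^+ p * (card_in pi)%:R * g_pi pi x.
Proof.
move=> pi_part; rewrite /f_pi /g_pi; under eq_bigr do rewrite prod_fourier.
rewrite -big_distrr -mulrA /=; congr (_ * _).
transitivity (\sum_(j : mindex) (\prod_(r < p) x (j r)) *
   \sum_(i | idx_in pi i) Chi i j).
  rewrite exchange_big /=; apply: eq_bigr => j _; rewrite big_distrr /=.
  by apply: eq_bigr => i _; rewrite big_split /= mulrC.
rewrite (eq_bigr (fun j => \prod_(r < p) x (j r) *
    ((card_in pi)%:R * (idx_vdash pi j)%:R))) => [|j _]; last by rewrite sum_Chi_in.
rewrite big_distrr /= [RHS]big_mkcond /=; apply: eq_bigr => j _.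
by case: (idx_vdash pi j); rewrite ?mulr0 ?mulr1 // mulrC.
Qed.

Lemma g_pi_fourier pi (x : idx -> C) : is_partition pi ->
  g_pi pi (fourier x) = (s ^+ p * (card_in pi)%:R)^-1 * f_pi pi x.
Proof.
move=> pi_part; have := f_pi_fourier (fourier x) pi_part.
rewrite (eq_f_pi _ (fourierK x)) f_pi_reflect => ->.
by rewrite mulKf // mulf_neq0 ?expf_neq0 ?scale_neq0 ?card_in_neq0.
Qed.

End Partitions.

Section Duality.
Variables (C : numClosedFieldType) (n : nat).
Local Notation N := n.+1.
Local Notation idx := 'I_N.
Local Notation s := (sqrtC (N%:R : C))^-1.

Lemma row0_circ (y : idx -> C) : Defs.row0 (circ y) =1 y.
Proof. by move=> k; rewrite /Defs.row0 mxE subr0. Qed.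

Lemma eq_circ (x y : idx -> C) : x =1 y -> circ x = circ y.
Proof. by move=> eq_xy; apply/matrixP => i j; rewrite !mxE eq_xy. Qed.

Lemma row0_Phi (H : 'M[C]_N) : Defs.row0 (Phi H) =1 fourier (Defs.row0 H).
Proof. exact: row0_circ. Qed.

Lemma Phi_circulant (H : 'M[C]_N) : Phi H = circ (Defs.row0 (Phi H)).
Proof. by apply: eq_circ => k; rewrite row0_Phi. Qed.

Lemma row0_Phi2 (H : 'M[C]_N) : Defs.row0 (Phi (Phi H)) =1 (fun k => Defs.row0 H (- k)).
Proof. by move=> k; rewrite row0_Phi (eq_fourier (row0_Phi H)) fourierK. Qed.

Lemma Phi4 (H : 'M[C]_N) : H = circ (Defs.row0 H) -> Phi (Phi (Phi (Phi H))) = H.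
Proof.
move=> H_circ; rewrite Phi_circulant [RHS]H_circ; apply: eq_circ => k.
by rewrite row0_Phi2 row0_Phi2 opprK.
Qed.

Lemma circ_hadamard_Phi (H : 'M[C]_N) : circ_hadamard H -> circ_hadamard (Phi H).
Proof.
move=> [H_circ [H_unit H_unitary]]; split; first exact: Phi_circulant.
rewrite H_circ in H_unitary; split.
  by move=> i j; rewrite mxE; apply: norm_fourier.
by apply: unitary_fourier => a; apply: H_unit.
Qed.

Lemma Xp_Phi p (H : 'M[C]_N) : Xp p H -> Xp p (Phi H).
Proof.
move=> [H_had H_real]; split; first exact: circ_hadamard_Phi.
move=> pi pi_part; have [f_real g_real] := H_real pi pi_part.
have scale_real : s \is Num.real by rewrite ger0_real ?scale_ge0.
rewrite (eq_f_pi _ (row0_Phi H)) (eq_g_pi _ (row0_Phi H)).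
rewrite f_pi_fourier // g_pi_fourier //.
have c_real : s ^+ p * (card_in n pi)%:R \is Num.real.
  by apply: rpredM; [apply: rpredX | apply: realn].
by split; apply: rpredM => //; rewrite rpredV.
Qed.

End Duality.

Theorem proposition3p4 (C : numClosedFieldType) (n p : nat) :
  (forall H : 'M[C]_n.+1, Xp p H -> Xp p (Phi H)) /\
  (forall H1 H2 : 'M[C]_n.+1, Xp p H1 -> Xp p H2 -> Phi H1 = Phi H2 -> H1 = H2) /\
  (forall H2 : 'M[C]_n.+1, Xp p H2 -> exists2 H1, Xp p H1 & Phi H1 = H2).
Proof.
split; first exact: Xp_Phi.
split=> [H1 H2 [[H1_circ _] _] [[H2_circ _] _] eq_Phi | H2 X2].
  by rewrite -(Phi4 H1_circ) -(Phi4 H2_circ) eq_Phi.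
exists (Phi (Phi (Phi H2))); first by do 3 apply: Xp_Phi.
by case: X2 => [[H2_circ _] _]; apply: Phi4.
Qed.
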